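(* Consider two hypotheses $\mathrm{H}_0,\mathrm{H}_1$ with prior probabilities $P(\mathrm{H}_0),P(\mathrm{H}_1)$, where under $\mathrm{H}_i$ the parameter is restricted to a grid $\theta_i^{[1]},\dots,\theta_i^{[N_i]}$ with spacing $\Delta\theta_i$ and prior weights $p(\theta_i^{[n]}\mid\mathrm{H}_i)\Delta\theta_i$, and for each grid point the conditional density of $\mathbf{X}$ lies in a convex uncertainty set $\mathcal{P}_{i,\theta_i^{[n]}}$; let $\mathbb{P}_i=\prod_{n=1}^{N_i}\mathcal{P}_{i,\theta_i^{[n]}}$. For given $\lambda_i,\mu_i\ge0$, $i\in\{0,1\}$, the least favorable distributions maximizing the cost $J^{\mathrm{NP}}_{\mathrm u}=\sum_{i=0}^1P(\mathrm{H}_i)\bigl(\lambda_i\alpha_i(\pi,\boldsymbol p^{\mathrm D}_i)+\mu_i\beta_i(\pi,\boldsymbol p^{\mathrm E}_i)\bigr)$ (over four vectors of distributions $\boldsymbol P^{\mathrm D}_0,\boldsymbol P^{\mathrm E}_0\in\mathbb{P}_0$, $\boldsymbol P^{\mathrm D}_1,\boldsymbol P^{\mathrm E}_1\in\mathbb{P}_1$) are given by $$\boldsymbol Q=(\boldsymbol Q^{\mathrm D}_0,\boldsymbol Q^{\mathrm D}_1,\boldsymbol Q^{\mathrm E}_0,\boldsymbol Q^{\mathrm E}_1)=\operatorname*{arg\,max}_{\boldsymbol P^{\mathrm D}_0,\boldsymbol P^{\mathrm E}_0\in\mathbb{P}_0,\ \boldsymbol P^{\mathrm D}_1,\boldsymbol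 P^{\mathrm E}_1\in\mathbb{P}_1}D_{\rho^{\mathrm{NP}}}(\boldsymbol P^{\mathrm D}_0,\boldsymbol P^{\mathrm D}_1,\boldsymbol P^{\mathrm E}_0,\boldsymbol P^{\mathrm E}_1),$$ where $D_{\rho^{\mathrm{NP}}}(\boldsymbol P^{\mathrm D}_0,\boldsymbol P^{\mathrm D}_1,\boldsymbol P^{\mathrm E}_0,\boldsymbol P^{\mathrm E}_1)=\int\rho^{\mathrm{NP}}(\boldsymbol p^{\mathrm D}_0(\mathbf{x}),\boldsymbol p^{\mathrm D}_1(\mathbf{x}),\boldsymbol p^{\mathrm E}_0(\mathbf{x}),\boldsymbol p^{\mathrm E}_1(\mathbf{x}))\,\mathrm{d}\mathbf{x}$ is the $f$-similarity induced by $\rho^{\mathrm{NP}}=\min\{\tilde D_0^{\mathrm{NP}},\tilde D_1^{\mathrm{NP}}\}$ with $$\tilde D_i^{\mathrm{NP}}(\boldsymbol s^{\mathrm D}_0,\boldsymbol s^{\mathrm D}_1,\boldsymbol s^{\mathrm E}_0,\boldsymbol s^{\mathrm E}_1)=\mu_iP(\mathrm{H}_i)\boldsymbol a_i^\top\boldsymbol s^{\mathrm E}_i-\mu_iP(\mathrm{H}_i)\frac{(\boldsymbol b_i^\top\boldsymbol s^{\mathrm E}_i)^2}{\boldsymbol c_i^\top\boldsymbol s^{\mathrm E}_i}+\lambda_{1-i}P(\mathrm{H}_{1-i})\boldsymbol c_{1-i}^\top\boldsymbol s^{\mathrm D}_{1-i},$$ $[\boldsymbol a_i]_n=(\theta_i^{[n]})^2p(\theta_i^{[n]}\mid\mathrm{H}_i)\Delta\theta_i$,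 $[\boldsymbol b_i]_n=\theta_i^{[n]}p(\theta_i^{[n]}\mid\mathrm{H}_i)\Delta\theta_i$, $[\boldsymbol c_i]_n=p(\theta_i^{[n]}\mid\mathrm{H}_i)\Delta\theta_i$.
   Context: A policy $\pi=(\delta,\hat\theta_0,\hat\theta_1)$ consists of a randomized decision rule $\delta$ with values in $[0,1]$ (probability of accepting $\mathrm{H}_1$) and estimators $\hat\theta_i$. Here $\boldsymbol p^{\mathrm D}_i=(p^{\mathrm D}_{i,\theta_i^{[1]}},\dots,p^{\mathrm D}_{i,\theta_i^{[N_i]}})$ and similarly $\boldsymbol p^{\mathrm E}_i$ are vectors of conditional densities with distributions $\boldsymbol P^{\mathrm D}_i,\boldsymbol P^{\mathrm E}_i$. With parameter integrals replaced by grid sums: $\alpha_0=\mathbb{E}[\delta\mid\mathrm{H}_0]$, $\alpha_1=\mathbb{E}[1-\delta\mid\mathrm{H}_1]$ computed with $\boldsymbol p^{\mathrm D}_i$; $\beta_0=\mathbb{E}[(1-\delta)(\hat\theta_0-\Theta_0)^2\mid\mathrm{H}_0]$, $\beta_1=\mathbb{E}[\delta(\hat\theta_1-\Theta_1)^2\mid\mathrm{H}_1]$ computed with $\boldsymbol p^{\mathrm E}_i$. ''Least favorable'' means maximizing the cost attained by the cost-minimizing policy, i.e. maximizing $\min_\pi J^{\mathrm{NP}}_{\mathrm u}$. For a continuous, concave, positively homogeneous function $f$ on $\mathbb{R}^N_{\ge0}$ and distributions with densities $p_1,\dots,p_N$, the $f$-similarity is $D_f=\int f(p_1(\mathbf{x}),\dots,p_N(\mathbf{x}))\,\mathrm{d}\mathbf{x}$.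 *)

From HB Require Import structures.
From mathcomp Require Import all_boot all_order all_algebra.
From mathcomp Require Import all_classical all_reals all_analysis.
Unset Printing Implicit Defensive.
Import Order.TTheory GRing.Theory Num.Theory.
Local Open Scope ring_scope.
Local Open Scope classical_set_scope.

(* Hypothesis index i : bool, with false = H_0 and true = H_1;
   "1 - i" is ~~ i.  Grid points under H_i are indexed by 'I_(N i). *)

Section Defs.
Context {d : measure_display} {T : measurableType d} {R : realType}.
Variable mu : {measure set T -> \bar R}.   (* reference measure "dx" *)

Definition is_density (f : T -> R) : Prop :=
  measurable_fun setT f /\ (forall x, 0 <= f x) /\ (\int[mu]_x (f x)%:E = 1)%E.

Definition convex_dens_set (A : set (T -> R)) : Prop :=
  forall (f g : T -> R) (t : R), A f -> A g -> 0 <= t <= 1 ->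
    A (fun x => t * f x + (1 - t) * g x).

Variables (N : bool -> nat) (th pr : forall i : bool, 'I_(N i) -> R)
          (dth : bool -> R).

Definition cvec (i : bool) (n : 'I_(N i)) : R := pr i n * dth i.
Definition bvec (i : bool) (n : 'I_(N i)) : R := th i n * pr i n * dth i.
Definition avec (i : bool) (n : 'I_(N i)) : R := th i n ^+ 2 * pr i n * dth i.

Definition dotv (i : bool) (w s : 'I_(N i) -> R) : R := \sum_(n < N i) w n * s n.

Definition dvecs := forall i : bool, 'I_(N i) -> T -> R.

Definition in_PP (U : forall i : bool, 'I_(N i) -> set (T -> R)) (pD pE : dvecs) : Prop :=
  forall (i : bool) (n : 'I_(N i)), U i n (pD i n) /\ U i n (pE i n).

Variables (Pr lam muc : bool -> R).

Definition Dtilde (pD pE : dvecs) (i : bool) (x : T) : R :=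
  muc i * Pr i * dotv i (avec i) (fun n => pE i n x)
  - muc i * Pr i * ((dotv i (bvec i) (fun n => pE i n x)) ^+ 2
                    / dotv i (cvec i) (fun n => pE i n x))
  + lam (~~ i) * Pr (~~ i) * dotv (~~ i) (cvec (~~ i)) (fun n => pD (~~ i) n x).

Definition rhoNP (pD pE : dvecs) (x : T) : R :=
  Num.min (Dtilde pD pE false x) (Dtilde pD pE true x).

Definition DrhoNP (pD pE : dvecs) : \bar R := (\int[mu]_x (rhoNP pD pE x)%:E)%E.

(* policy pi = (delta, est false, est true) *)
Definition admissible_policy (delta : T -> R) (est : bool -> T -> R) : Prop :=
  measurable_fun setT delta /\ (forall x, 0 <= delta x <= 1) /\
  (forall i, measurable_fun setT (est i)).

(* probability of wrongly rejecting H_i: delta under H_0, 1 - delta under H_1 *)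
Definition wrong_dec (delta : T -> R) (i : bool) (x : T) : R :=
  if i then 1 - delta x else delta x.
Definition right_dec (delta : T -> R) (i : bool) (x : T) : R :=
  if i then delta x else 1 - delta x.

Definition alphaNP (delta : T -> R) (pD : dvecs) (i : bool) : \bar R :=
  (\sum_(n < N i) (cvec i n)%:E * \int[mu]_x (wrong_dec delta i x * pD i n x)%:E)%E.

Definition betaNP (delta : T -> R) (est : bool -> T -> R) (pE : dvecs) (i : bool)
  : \bar R :=
  (\sum_(n < N i) (cvec i n)%:E *
     \int[mu]_x (right_dec delta i x * (est i x - th i n) ^+ 2 * pE i n x)%:E)%E.

Definition JNP (delta : T -> R) (est : bool -> T -> R) (pD pE : dvecs) : \bar R :=
  (\sum_(i : bool) (Pr i)%:E *
     ((lam i)%:E * alphaNP delta pD i + (muc i)%:E * betaNP delta est pE i))%E.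

Definition minJNP (pD pE : dvecs) : \bar R :=
  ereal_inf [set y | exists delta est,
               admissible_policy delta est /\ y = JNP delta est pD pE].

Definition is_argmax (U : forall i : bool, 'I_(N i) -> set (T -> R))
  (F : dvecs -> dvecs -> \bar R) (qD qE : dvecs) : Prop :=
  in_PP U qD qE /\
  forall pD pE : dvecs, in_PP U pD pE -> (F pD pE <= F qD qE)%E.

End Defs.

From HB Require Import structures.
From mathcomp Require Import all_boot all_order all_algebra.
From mathcomp Require Import all_classical all_reals all_analysis.
From mathcomp Require Import ring measurable_realfun.
Import Order.TTheory GRing.Theory Num.Theory.
Local Open Scope ring_scope.
Local Open Scope classical_set_scope.

(* The minimization over policies separates pointwise in x.  The integrand of
   J^NP is affine in delta(x): its coefficients are D~_1(x) and D~_0(x) plus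
   the excess of the posterior squared error of the estimates over its minimum
   a^T s - (b^T s)^2 / c^T s, which is a weighted variance attained at the
   posterior mean b^T s / c^T s.  Hence min_pi J^NP = int min(D~_0, D~_1) =
   D_rho^NP for all densities, attained by delta = 1[D~_1 <= D~_0] and the
   posterior-mean estimators, and the two objectives have the same maximizers. *)

Section WeightedVariance.
Variables (R : realFieldType) (k : nat) (w t : 'I_k -> R).
Hypothesis w_ge0 : forall n, 0 <= w n.

Lemma wsq_devE e :
  \sum_(n < k) w n * (e - t n) ^+ 2 =
  e ^+ 2 * \sum_(n < k) w n - 2 * e * \sum_(n < k) w n * t n
  + \sum_(n < k) w n * t n ^+ 2.
Proof.
rewrite !mulr_sumr -sumrB -big_split /=.
by apply: eq_bigr => n _; ring.
Qed.

Lemma wsq_dev_degenerate : \sum_(n < k) w n = 0 ->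
  forall e, \sum_(n < k) w n * (e - t n) ^+ 2 = 0 /\
            \sum_(n < k) w n * t n ^+ 2 - (\sum_(n < k) w n * t n) ^+ 2
              / \sum_(n < k) w n = 0.
Proof.
move=> W0 e; have w0 n : w n = 0 by apply: (psumr_eq0P _ W0).
by rewrite W0 !big1 ?invr0 ?mulr0 ?subr0 // => n _; rewrite w0 mul0r.
Qed.

Lemma wsq_dev_ge e :
  \sum_(n < k) w n * t n ^+ 2 - (\sum_(n < k) w n * t n) ^+ 2 / \sum_(n < k) w n
  <= \sum_(n < k) w n * (e - t n) ^+ 2.
Proof.
have [W0|W_neq0] := eqVneq (\sum_(n < k) w n) 0.
  by have [-> ->] := wsq_dev_degenerate W0 e.
have W_gt0 : 0 < \sum_(n < k) w n by rewrite lt_def W_neq0 sumr_ge0.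
rewrite wsq_devE -subr_ge0.
set W := \sum_(n < k) w n; set M1 := \sum_(n < k) _ * t n.
set M2 := \sum_(n < k) _ * _ ^+ 2.
have -> : e ^+ 2 * W - 2 * e * M1 + M2 - (M2 - M1 ^+ 2 / W) = (e * W - M1) ^+ 2 / W.
  by field.
by rewrite divr_ge0 ?sqr_ge0 ?ltW.
Qed.

Lemma wsq_dev_mean :
  let m := (\sum_(n < k) w n * t n) / \sum_(n < k) w n in
  \sum_(n < k) w n * (m - t n) ^+ 2 =
  \sum_(n < k) w n * t n ^+ 2 - (\sum_(n < k) w n * t n) ^+ 2 / \sum_(n < k) w n.
Proof.
move=> m; have [W0|W_neq0] := eqVneq (\sum_(n < k) w n) 0.
  by have [-> ->] := wsq_dev_degenerate W0 m.
by rewrite wsq_devE /m; field.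
Qed.

End WeightedVariance.

Section PosteriorRisk.
Context {R : realType}.
Variables (N : bool -> nat)
  (th pr : forall i : bool, 'I_(N i) -> R) (dth : bool -> R).
Hypotheses (dth_ge0 : forall i, 0 <= dth i) (pr_ge0 : forall i n, 0 <= pr i n).

Local Notation cv := (cvec N pr dth).
Local Notation bv := (bvec N th pr dth).
Local Notation av := (avec N th pr dth).

Definition post_sq_err i (s : 'I_(N i) -> R) (e : R) : R :=
  \sum_(n < N i) cv i n * ((e - th i n) ^+ 2 * s n).

Definition post_mean i (s : 'I_(N i) -> R) : R :=
  dotv N i (bv i) s / dotv N i (cv i) s.

Definition post_var i (s : 'I_(N i) -> R) : R :=
  dotv N i (av i) s - dotv N i (bv i) s ^+ 2 / dotv N i (cv i) s.

Lemma cvec_ge0 i n : 0 <= cv i n.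
Proof. exact: mulr_ge0. Qed.

Section Weights.
Variables (i : bool) (s : 'I_(N i) -> R).
Hypothesis s_ge0 : forall n, 0 <= s n.

Let w n := cv i n * s n.

Let w_ge0 n : 0 <= w n.
Proof. by rewrite mulr_ge0 ?cvec_ge0. Qed.

Let dotv_cvecE : dotv N i (cv i) s = \sum_(n < N i) w n.
Proof. by []. Qed.

Let dotv_bvecE : dotv N i (bv i) s = \sum_(n < N i) w n * th i n.
Proof. by apply: eq_bigr => n _; rewrite /w /bvec /cvec; ring. Qed.

Let dotv_avecE : dotv N i (av i) s = \sum_(n < N i) w n * th i n ^+ 2.
Proof. by apply: eq_bigr => n _; rewrite /w /avec /cvec; ring. Qed.

Let post_sq_errE e : post_sq_err i s e = \sum_(n < N i) w n * (e - th i n) ^+ 2.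
Proof. by apply: eq_bigr => n _; rewrite /w; ring. Qed.

Lemma post_var_le_sq_err e : post_var i s <= post_sq_err i s e.
Proof.
rewrite /post_var dotv_cvecE dotv_bvecE dotv_avecE post_sq_errE.
exact: wsq_dev_ge.
Qed.

Lemma post_sq_err_mean : post_sq_err i s (post_mean i s) = post_var i s.
Proof.
rewrite /post_var /post_mean dotv_cvecE dotv_bvecE dotv_avecE post_sq_errE.
exact: wsq_dev_mean.
Qed.

End Weights.

Lemma sum_cvec_scale i r (s : 'I_(N i) -> R) :
  \sum_(n < N i) cv i n * (r * s n) = r * dotv N i (cv i) s.
Proof. by rewrite /dotv mulr_sumr; apply: eq_bigr => n _; ring. Qed.

Lemma sum_cvec_sq_err_scale i r e (s : 'I_(N i) -> R) :
  \sum_(n < N i) cv i n * (r * (e - th i n) ^+ 2 * s n) = r * post_sq_err i s e.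
Proof. by rewrite /post_sq_err mulr_sumr; apply: eq_bigr => n _; ring. Qed.

End PosteriorRisk.

Section NonnegIntegrals.
Context {d : measure_display} {T : measurableType d} {R : realType}.
Variable mu : {measure set T -> \bar R}.
Local Open Scope ereal_scope.

Lemma ge0_integralZl_fin (r : R) (f : T -> R) : (0 <= r)%R ->
  (forall x, 0 <= f x)%R -> measurable_fun setT f ->
  \int[mu]_x (r * f x)%:E = r%:E * \int[mu]_x (f x)%:E.
Proof.
move=> r_ge0 f_ge0 mf; under eq_integral do rewrite EFinM.
by apply: ge0_integralZl_EFin => // [x _|]; [rewrite lee_fin | exact/measurable_EFinP].
Qed.

Lemma ge0_integralD_fin (f g : T -> R) :
  (forall x, 0 <= f x)%R -> (forall x, 0 <= g x)%R ->
  measurable_fun setT f -> measurable_fun setT g ->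
  \int[mu]_x (f x + g x)%:E = \int[mu]_x (f x)%:E + \int[mu]_x (g x)%:E.
Proof.
move=> f_ge0 g_ge0 mf mg; under eq_integral do rewrite EFinD.
by apply: ge0_integralD => // [x _||x _|]; rewrite ?lee_fin //;
  exact/measurable_EFinP.
Qed.

Lemma ge0_integral_sum_fin (I : Type) (s : seq I) (F : I -> T -> R) :
  (forall i x, 0 <= F i x)%R -> (forall i, measurable_fun setT (F i)) ->
  \int[mu]_x (\sum_(i <- s) F i x)%:E = \sum_(i <- s) \int[mu]_x (F i x)%:E.
Proof.
move=> F_ge0 mF; under eq_integral do rewrite -sumEFin.
apply: ge0_integral_sum => // [i|i x _]; last by rewrite lee_fin.
exact/measurable_EFinP.
Qed.

End NonnegIntegrals.

Lemma measurable_invr (R : realType) : measurable_fun [set: R] GRing.inv.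
Proof.
have -> : GRing.inv = (fun x : R => if x == 0 then 0 else x^-1).
  by apply/funext => x; case: eqP => // ->; rewrite invr0.
apply: measurable_fun_if => //.
  exact: (measurable_fun_eqr (f := id) (g := cst 0)).
have -> : [set: R] `&` (fun x => x == 0) @^-1` [set false] = ~` [set 0].
  by apply/seteqP; split => x /=; [case=> _ /eqP | move/eqP/negbTE].
apply: open_continuous_measurable_fun.
  exact/closed_openC/accessible_closed_set1/hausdorff_accessible/Rhausdorff.
by move=> x; rewrite inE => /eqP; exact: inv_continuous.
Qed.

Lemma measurable_funV d (T : measurableType d) (R : realType) (f : T -> R) :
  measurable_fun setT f -> measurable_fun setT (fun x => (f x)^-1).
Proof. exact: measurableT_comp (@measurable_invr R). Qed.

Ltac solve_ge0 := repeat first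
  [ assumption | apply: sqr_ge0 | apply: sumr_ge0 => ? _ | apply: addr_ge0
  | apply: mulr_ge0 | apply: cvec_ge0 | move=> ?
  | match goal with H : _ |- _ => apply: H end ].

Ltac solve_measurable := repeat first
  [ assumption | apply: measurable_cst | apply: measurable_funD
  | apply: measurable_funB | apply: measurable_funN | apply: measurable_funM
  | apply: measurable_funX | apply: measurable_funV | apply: measurable_sum => ? | move=> ?
  | match goal with H : _ |- _ => apply: H end ].

Section NeymanPearsonCost.
Context {d : measure_display} {T : measurableType d} {R : realType}.
Variable mu : {measure set T -> \bar R}.
Variables (N : bool -> nat) (th pr : forall i : bool, 'I_(N i) -> R)
  (dth : bool -> R) (Pr lam muc : bool -> R).
Hypotheses (Pr_ge0 : forall i, 0 <= Pr i) (lam_ge0 : forall i, 0 <= lam i)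
  (muc_ge0 : forall i, 0 <= muc i) (dth_ge0 : forall i, 0 <= dth i)
  (pr_ge0 : forall i n, 0 <= pr i n).
Variables (pD pE : @dvecs d T R N).
Hypotheses (mpD : forall i n, measurable_fun setT (pD i n))
  (mpE : forall i n, measurable_fun setT (pE i n))
  (pD_ge0 : forall i n x, 0 <= pD i n x) (pE_ge0 : forall i n x, 0 <= pE i n x).

Local Notation cv := (cvec N pr dth).
Local Notation Dt := (Dtilde N th pr dth Pr lam muc pD pE).
Local Notation rho := (rhoNP N th pr dth Pr lam muc pD pE).
Local Notation pEx i x := (fun n => pE i n x).

Definition cost_density (delta : T -> R) (est : bool -> T -> R) (x : T) : R :=
  \sum_(i : bool) Pr i *
    (lam i * \sum_(n < N i) cv i n * (wrong_dec delta i x * pD i n x)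
     + muc i * \sum_(n < N i) cv i n *
         (right_dec delta i x * (est i x - th i n) ^+ 2 * pE i n x)).

Definition excess_risk (est : bool -> T -> R) i x : R :=
  muc i * Pr i *
    (post_sq_err N th pr dth i (pEx i x) (est i x) - post_var N th pr dth i (pEx i x)).

Lemma excess_risk_ge0 est i x : 0 <= excess_risk est i x.
Proof.
rewrite /excess_risk !mulr_ge0 ?subr_ge0 //.
exact: post_var_le_sq_err.
Qed.

Lemma cost_densityE delta est x :
  cost_density delta est x =
  delta x * (Dt true x + excess_risk est true x)
  + (1 - delta x) * (Dt false x + excess_risk est false x).
Proof.
rewrite /cost_density big_bool /= !sum_cvec_scale !sum_cvec_sq_err_scale.
by rewrite /excess_risk /Dtilde /post_var /=; ring.
Qed.

Lemma rho_le_cost_density delta est x : 0 <= delta x <= 1 ->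
  rho x <= cost_density delta est x.
Proof.
move=> /andP[delta_ge0 delta_le1]; rewrite cost_densityE /rhoNP.
set m := Num.min _ _.
have m_le i : m <= Dt i x + excess_risk est i x.
  have m_le_Dt : m <= Dt i x by case: i; rewrite ge_min lexx ?orbT.
  by rewrite -[m]addr0 lerD ?excess_risk_ge0.
have -> : m = delta x * m + (1 - delta x) * m by ring.
by rewrite lerD // ler_wpM2l ?subr_ge0.
Qed.

Definition bayes_test (x : T) : R := if Dt false x < Dt true x then 0 else 1.
Definition bayes_est i x : R := post_mean N th pr dth i (pEx i x).

Lemma cost_density_bayes x : cost_density bayes_test bayes_est x = rho x.
Proof.
have no_excess i : excess_risk bayes_est i x = 0.
  by rewrite /excess_risk post_sq_err_mean ?subrr ?mulr0.
rewrite cost_densityE !no_excess !addr0 /rhoNP minElt /bayes_test.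
by case: ifP => _; ring.
Qed.

Lemma measurable_Dtilde i : measurable_fun setT (Dt i).
Proof. rewrite /Dtilde /dotv; solve_measurable. Qed.

Lemma admissible_bayes : admissible_policy bayes_test bayes_est.
Proof.
split; [|split].
- apply: measurable_fun_ifT; rewrite ?measurable_cst //.
  by apply: measurable_fun_ltr; exact: measurable_Dtilde.
- by move=> x; rewrite /bayes_test; case: ifP; rewrite lexx ler01.
- move=> i; rewrite /bayes_est /post_mean /dotv; solve_measurable.
Qed.

Section AdmissiblePolicy.
Variables (delta : T -> R) (est : bool -> T -> R).
Hypothesis adm : admissible_policy delta est.

Let mdelta : measurable_fun setT delta. Proof. by case: adm. Qed.
Let delta01 x : 0 <= delta x <= 1. Proof. by case: adm => _ []. Qed.
Let mest i : measurable_fun setT (est i). Proof. by case: adm => _ []. Qed.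

Let wrong_dec_ge0 i x : 0 <= wrong_dec delta i x.
Proof. by have /andP[] := delta01 x; case: i => //= _; rewrite subr_ge0. Qed.

Let right_dec_ge0 i x : 0 <= right_dec delta i x.
Proof. by have /andP[] := delta01 x; case: i => //= _; rewrite subr_ge0. Qed.

Let measurable_wrong_dec i : measurable_fun setT (wrong_dec delta i).
Proof. by case: i => //=; exact: measurable_funB. Qed.

Let measurable_right_dec i : measurable_fun setT (right_dec delta i).
Proof. by case: i => //=; exact: measurable_funB. Qed.

Lemma cost_density_ge0 x : 0 <= cost_density delta est x.
Proof. rewrite /cost_density; solve_ge0. Qed.

Lemma measurable_cost_density : measurable_fun setT (cost_density delta est).
Proof. rewrite /cost_density; solve_measurable. Qed.

Lemma JNP_integral :
  JNP mu N th pr dth Pr lam muc delta est pD pE =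
  (\int[mu]_x (cost_density delta est x)%:E)%E.
Proof.
rewrite /cost_density ge0_integral_sum_fin; [|solve_ge0|solve_measurable].
apply: eq_bigr => i _.
rewrite ge0_integralZl_fin //; [|solve_ge0|solve_measurable].
rewrite ge0_integralD_fin; [|solve_ge0|solve_ge0|solve_measurable|solve_measurable].
rewrite ge0_integralZl_fin //; [|solve_ge0|solve_measurable].
rewrite ge0_integralZl_fin //; [|solve_ge0|solve_measurable].
congr (_ * (_ * _ + _ * _))%E.
- rewrite ge0_integral_sum_fin; [|solve_ge0|solve_measurable].
  by apply: eq_bigr => n _; rewrite ge0_integralZl_fin //; [exact: cvec_ge0|solve_ge0|solve_measurable].
- rewrite ge0_integral_sum_fin; [|solve_ge0|solve_measurable].
  by apply: eq_bigr => n _; rewrite ge0_integralZl_fin //; [exact: cvec_ge0|solve_ge0|solve_measurable].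
Qed.

End AdmissiblePolicy.

Lemma minJNP_DrhoNP :
  minJNP mu N th pr dth Pr lam muc pD pE = DrhoNP mu N th pr dth Pr lam muc pD pE.
Proof.
have adm_bayes := admissible_bayes.
have rhoE : rho = cost_density bayes_test bayes_est.
  by apply/funext => x; rewrite cost_density_bayes.
apply/eqP; rewrite eq_le; apply/andP; split.
  apply: ereal_inf_lbound; exists bayes_test, bayes_est; split=> //.
  by rewrite JNP_integral // /DrhoNP rhoE.
apply/ereal_infP => _ [delta [est [adm ->]]].
rewrite JNP_integral // /DrhoNP rhoE.
apply: ge0_le_integral => // [x _|||x _].
- by rewrite lee_fin; exact: cost_density_ge0.
- exact/measurable_EFinP/measurable_cost_density.
- exact/measurable_EFinP/measurable_cost_density.
- by rewrite lee_fin -rhoE; apply: rho_le_cost_density; case: adm => _ [].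
Qed.

End NeymanPearsonCost.

Theorem corollary2 (d : measure_display) (T : measurableType d) (R : realType)
  (mu : {measure set T -> \bar R})
  (N : bool -> nat) (th pr : forall i : bool, 'I_(N i) -> R) (dth : bool -> R)
  (Pr lam muc : bool -> R)
  (U : forall i : bool, 'I_(N i) -> set (T -> R))
  (hPr : forall i, 0 <= Pr i) (hPr1 : Pr false + Pr true = 1)
  (hlam : forall i, 0 <= lam i) (hmuc : forall i, 0 <= muc i)
  (hdth : forall i, 0 < dth i) (hpr : forall i n, 0 <= pr i n)
  (hUd : forall i n f, U i n f -> is_density mu f)
  (hUc : forall i n, convex_dens_set (U i n))
  (qD qE : forall i : bool, 'I_(N i) -> T -> R) :
  is_argmax N U (minJNP mu N th pr dth Pr lam muc) qD qE <->
  is_argmax N U (DrhoNP mu N th pr dth Pr lam muc) qD qE.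
Proof.
have objectivesE pD pE : in_PP N U pD pE ->
    minJNP mu N th pr dth Pr lam muc pD pE = DrhoNP mu N th pr dth Pr lam muc pD pE.
  move=> inPP; have dD i n := hUd _ _ _ (proj1 (inPP i n)).
  have dE i n := hUd _ _ _ (proj2 (inPP i n)).
  apply: minJNP_DrhoNP => // [i|i n|i n|i n x|i n x].
  - exact: ltW.
  - by case: (dD i n).
  - by case: (dE i n).
  - by case: (dD i n) => _ [].
  - by case: (dE i n) => _ [].
split=> -[inPPq qmax]; split=> // pD pE inPP.
- by rewrite -!objectivesE //; exact: qmax.
- by rewrite !objectivesE //; exact: qmax.
Qed.
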